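(* Let $\mathbf{I}$ be a $d$-system of ideals in a ring $R$ and $A:=\mathscr{A}(R,\mathbf{I})$. For all $1\le k\le d$, there is an isomorphism of left $A$-modules $\Delta_k\cong J_{k-1}T_{d+1-k}$.
   Context: A $d$-system of ideals in $R$ is a collection $\{I_{ij}\mid1\le i,j\le d+1\}$ of two-sided ideals with $I_{ij}I_{jk}\subset I_{ik}$ and $I_{ij}=R$ for $i\ge j$. $\mathscr{A}(R,\mathbf{I}):=\bigoplus_{1\le i,j\le d}X_{ij}$, $X_{ij}:=I_{ij}/I_{i,d+1}$, with multiplication $(x+I_{i,d+1})(y+I_{k,d+1})=\delta_{jk}(xy+I_{i,d+1})\in X_{il}$ for $x\in I_{ij},y\in I_{kl}$. Put $e_k:=1+I_{k,d+1}\in X_{kk}$, $f_j:=\sum_{k>j}e_k$ for $0\le j\le d$ ($f_0=1$, $f_d=0$), $J_j:=Af_jA$, $\Delta_k:=(A/J_k)e_k$. Define $\mathbb{T}_{kl}:=R/I_{k,d+2-l}$ and $T_j:=\bigoplus_{i=1}^d\mathbb{T}_{ij}$, a left $A$-module via $(x+I_{i,d+1})\cdot(r+I_{k,d+2-l})=\delta_{jk}(xr+I_{i,d+2-l})\in\mathbb{T}_{il}$ for $x\in I_{ij}$, $r\in R$. *)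

From HB Require Import structures.
From mathcomp Require Import all_boot all_order all_algebra.
Set Implicit Arguments.
Unset Strict Implicit.
Unset Printing Implicit Defensive.
Import GRing.Theory.
Local Open Scope ring_scope.

Section DSystem.
Variable R : pzRingType.

Definition two_sided_ideal (P : R -> Prop) : Prop :=
  [/\ P 0,
      (forall x y, P x -> P y -> P (x - y)),
      (forall r x, P x -> P (r * x)) &
      (forall r x, P x -> P (x * r))].

Definition d_system (d : nat) (I : nat -> nat -> R -> Prop) : Prop :=
  [/\ (forall i j, (1 <= i <= d.+1)%N -> (1 <= j <= d.+1)%N ->
         two_sided_ideal (I i j)),
      (forall i j, (1 <= i <= d.+1)%N -> (1 <= j <= i)%N -> forall x, I i j x) &
      (forall i j k, (1 <= i <= d.+1)%N -> (1 <= j <= d.+1)%N ->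
         (1 <= k <= d.+1)%N ->
         forall x y, I i j x -> I j k y -> I i k (x * y))].

Variables (d : nat) (I : nat -> nat -> R -> Prop).

(* Elements of A = (+)_{i,j} I_ij / I_{i,d+1} are represented by d x d
   matrices X (row/column index i : 'I_d stands for paper index i+1) with
   X i j in I_{ij}; two representatives give the same element iff their
   difference has (i,j)-entry in I_{i,d+1}. The multiplication of A is the
   matrix product (bilinear extension of the paper's multiplication). *)
Definition inA (X : 'M[R]_d) : Prop := forall i j : 'I_d, I i.+1 j.+1 (X i j).
Definition zeroA (X : 'M[R]_d) : Prop := forall i j : 'I_d, I i.+1 d.+1 (X i j).

Definition eA (k : nat) : 'M[R]_d :=
  \matrix_(i, j) ((i == j) && (i.+1 == k)%N)%:R.
Definition fA (j : nat) : 'M[R]_d :=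
  \matrix_(i, i') ((i == i') && (j < i.+1)%N)%:R.

(* membership of (the class of) X in the two-sided ideal J_j = A f_j A *)
Definition inJ (j : nat) (X : 'M[R]_d) : Prop :=
  inA X /\ exists n (a b : 'I_n -> 'M[R]_d),
    (forall t, inA (a t) /\ inA (b t)) /\
    zeroA (X - \sum_(t < n) a t *m fA j *m b t).

(* Delta_k = (A/J_k) e_k : representatives {a e_k | a in A}, and a
   representative is zero iff it lies in J_k. *)
Definition Delta_S (k : nat) (X : 'M[R]_d) : Prop := exists2 a, inA a & X = a *m eA k.
Definition Delta_Z (k : nat) (X : 'M[R]_d) : Prop := inJ k X.

(* T_j = (+)_i R / I_{i,d+2-j}: column vectors, A acting by matrix product;
   a vector is zero iff its i-th entry lies in I_{i,d+2-j}. *)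
Definition T_Z (j : nat) (v : 'cV[R]_d) : Prop :=
  forall i : 'I_d, I i.+1 (d.+2 - j) (v i ord0).
(* J_m T_j = finite sums of a.t with a in J_m, t in T_j *)
Definition JT_S (m j : nat) (v : 'cV[R]_d) : Prop :=
  exists n (a : 'I_n -> 'M[R]_d) (t : 'I_n -> 'cV[R]_d),
    (forall s, inJ m (a s)) /\ T_Z j (v - \sum_(s < n) a s *m t s).

(* Isomorphism of left A-modules between the subquotients S1/Z1 and S2/Z2
   (A acting through act1, act2): a map of representatives that is
   well-defined and injective modulo Z, additive and A-linear modulo Z2,
   and surjective modulo Z2. *)
Definition subquot_iso (V1 V2 : zmodType)
  (act1 : 'M[R]_d -> V1 -> V1) (act2 : 'M[R]_d -> V2 -> V2)
  (S1 Z1 : V1 -> Prop) (S2 Z2 : V2 -> Prop) : Prop :=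
  exists f : V1 -> V2,
    [/\ (forall v, S1 v -> S2 (f v)),
        (forall v w, S1 v -> S1 w -> (Z1 (v - w) <-> Z2 (f v - f w))),
        (forall v w, S1 v -> S1 w -> Z2 (f (v + w) - (f v + f w))),
        (forall x v, inA x -> S1 v -> Z2 (f (act1 x v) - act2 x (f v))) &
        (forall u, S2 u -> exists2 v, S1 v & Z2 (f v - u))].

Definition Delta_iso_JT (k : nat) : Prop :=
  subquot_iso (fun x (v : 'M[R]_d) => x *m v) (fun x (v : 'cV[R]_d) => x *m v)
    (Delta_S k) (Delta_Z k) (JT_S k.-1 (d.+1 - k)) (T_Z (d.+1 - k)).

End DSystem.

From HB Require Import structures.
From mathcomp Require Import all_boot all_order all_algebra.
From mathcomp Require Import zify.
Set Implicit Arguments.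
Unset Strict Implicit.
Unset Printing Implicit Defensive.
Import GRing.Theory.
Local Open Scope ring_scope.

(* The isomorphism sends the class of a e_k to the k-th column of a, read in
   T_{d+1-k} = (+)_i R/I_{i,k+1}, i.e. a e_k |-> a e_k ek with ek the k-th unit
   column.  It is injective because a e_k lies in J_k = A f_k A exactly when
   that column has its entries in the I_{i,k+1}: f_k kills the rows <= k of a
   column, so A f_k A maps columns into (+)_i I_{i,k+1}; conversely such a
   column is x f_k E_{k+1,k} with x put in column k+1.  It is onto J_{k-1}T
   because f_{k-1} = e_k + f_k, and the f_k part again vanishes in T. *)

Lemma mulmx_supp (R : pzRingType) m n p (M : 'M[R]_(m, n)) (B : 'M[R]_(n, p))
  i j r : (forall l, l != r -> B l j = 0) -> (M *m B) i j = M i r * B r j.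
Proof.
move=> B0; rewrite mxE (bigD1 r) //= big1 ?addr0 // => l /B0->.
by rewrite mulr0.
Qed.

Arguments mulmx_supp {R m n p M B i j} r.

Section TwoSidedIdeal.
Variables (R : pzRingType) (P : R -> Prop).
Hypothesis idP : two_sided_ideal P.

Lemma ideal0 : P 0.
Proof. by case: idP. Qed.

Lemma idealB {x y} : P x -> P y -> P (x - y).
Proof. by case: idP => _ + _ _; apply. Qed.

Lemma idealN {x} : P x -> P (- x).
Proof. by move=> Px; rewrite -sub0r; apply: idealB => //; apply: ideal0. Qed.

Lemma idealD {x y} : P x -> P y -> P (x + y).
Proof. by move=> Px Py; rewrite -[y]opprK; apply: idealB => //; apply: idealN. Qed.

Lemma idealMr {r x} : P x -> P (x * r).
Proof. by case: idP => _ _ _; apply. Qed.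

Lemma ideal_sum {n} {F : 'I_n -> R} : (forall t, P (F t)) -> P (\sum_t F t).
Proof.
by move=> PF; apply: (big_ind P); [apply: ideal0 | move=> x y; apply: idealD | ].
Qed.

End TwoSidedIdeal.

Section DSystemAlgebra.
Variables (R : pzRingType) (d : nat) (I : nat -> nat -> R -> Prop).
Hypothesis HI : d_system d I.

Lemma dsys_ideal i j : (1 <= i <= d.+1)%N -> (1 <= j <= d.+1)%N ->
  two_sided_ideal (I i j).
Proof. by case: HI => + _ _; apply. Qed.

Lemma dsys_full i j x : (1 <= j <= i)%N -> (i <= d.+1)%N -> I i j x.
Proof. by move=> hj hi; case: HI => _ + _; apply=> //; lia. Qed.

Lemma dsys_le i l m x : (1 <= i <= d.+1)%N -> (l <= d.+1)%N ->
  (1 <= m <= l)%N -> I i l x -> I i m x.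
Proof.
move=> hi hl hm Ix; rewrite -[x]mulr1.
case: HI => _ _ /(_ i l m); apply=> //; try lia.
by apply: dsys_full; lia.
Qed.

Lemma row_bounds (i : 'I_d) : (1 <= i.+1 <= d.+1)%N.
Proof. by have := ltn_ord i; lia. Qed.

Lemma entry_ideal (i : 'I_d) l : (1 <= l <= d.+1)%N -> two_sided_ideal (I i.+1 l).
Proof. exact/dsys_ideal/row_bounds. Qed.

Lemma entry0 (i j : 'I_d) : I i.+1 j.+1 0.
Proof. exact: ideal0 (entry_ideal i (row_bounds j)). Qed.

Lemma inA0 : inA I (0 : 'M_d).
Proof. by move=> i j; rewrite mxE; apply: entry0. Qed.

Lemma zeroA0 : zeroA I (0 : 'M_d).
Proof. by move=> i j; rewrite mxE; apply: ideal0 (entry_ideal _ _); lia. Qed.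

Lemma inAD (a b : 'M[R]_d) : inA I a -> inA I b -> inA I (a + b).
Proof.
move=> ha hb i j; rewrite mxE.
by apply: (idealD (entry_ideal i (row_bounds j))); [exact: ha | exact: hb].
Qed.

Lemma inAB (a b : 'M[R]_d) : inA I a -> inA I b -> inA I (a - b).
Proof.
move=> ha hb i j; rewrite !mxE.
by apply: (idealB (entry_ideal i (row_bounds j))); [exact: ha | exact: hb].
Qed.

Lemma mulmx_eA (c : 'M[R]_d) k i j :
  (c *m eA R d k) i j = if (j.+1 == k)%N then c i j else 0.
Proof.
rewrite (mulmx_supp j) => [|l /negbTE]; last by rewrite mxE => ->.
by rewrite mxE eqxx /=; case: ifP; rewrite (mulr1, mulr0).
Qed.

Lemma inA_mul_eA (c : 'M[R]_d) k : inA I c -> inA I (c *m eA R d k).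
Proof.
move=> hc i j; rewrite mulmx_eA; case: ifP => _; first exact: hc.
exact: entry0.
Qed.

Lemma inA_eA k : inA I (eA R d k).
Proof.
move=> i j; rewrite mxE; case: (i =P j) => [<-|_] /=; last first.
  by rewrite mulr0n; apply: entry0.
case: (_ == _); first by rewrite mulr1n; apply: dsys_full; have := ltn_ord i; lia.
by rewrite mulr0n; apply: entry0.
Qed.

Lemma fA_mul_low j (y : 'cV[R]_d) (m : 'I_d) :
  (m < j)%N -> (fA R d j *m y) m ord0 = 0.
Proof.
move=> hm; rewrite mxE big1 // => l _.
by rewrite mxE (_ : (j < m.+1)%N = false) ?andbF ?mul0r //; lia.
Qed.

Lemma fA_predE k : (0 < k)%N -> fA R d k.-1 = eA R d k + fA R d k.
Proof.
move=> k_gt0; apply/matrixP => i j; rewrite !mxE.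
case: (i =P j) => _ /=; last by rewrite addr0.
case: (i.+1 =P k) => hik /=.
  have [-> ->] : (k.-1 < i.+1)%N /\ (k < i.+1)%N = false by split; lia.
  by rewrite addr0.
have -> : (k.-1 < i.+1)%N = (k < i.+1)%N by apply/idP/idP; lia.
by rewrite add0r.
Qed.

Lemma fA_pred_mul_eA k : (0 < k)%N -> fA R d k.-1 *m eA R d k = eA R d k.
Proof.
move=> k_gt0; apply/matrixP => i j; rewrite mulmx_eA !mxE.
case: (i =P j) => [->|_] /=; last by case: ifP.
by case: (j.+1 =P k) => // hjk; rewrite (_ : (k.-1 < j.+1)%N) //; lia.
Qed.

Section FixedK.
Variable k : nat.
Hypothesis hk : (1 <= k <= d)%N.

Let hk1 : (1 <= k.+1 <= d.+1)%N. Proof. lia. Qed.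

Definition Tnull (v : 'cV[R]_d) := forall i : 'I_d, I i.+1 k.+1 (v i ord0).

Lemma T_ZE (v : 'cV[R]_d) : T_Z I (d.+1 - k) v <-> Tnull v.
Proof. by rewrite /T_Z (_ : d.+2 - (d.+1 - k) = k.+1)%N //; lia. Qed.

Lemma Tnull0 : Tnull 0.
Proof. by move=> i; rewrite mxE; exact: ideal0 (entry_ideal i hk1). Qed.

Lemma TnullD (v w : 'cV[R]_d) : Tnull v -> Tnull w -> Tnull (v + w).
Proof.
by move=> hv hw i; rewrite mxE; apply: (idealD (entry_ideal i hk1)); [apply: hv | apply: hw].
Qed.

Lemma TnullN (v : 'cV[R]_d) : Tnull v -> Tnull (- v).
Proof. by move=> hv i; rewrite mxE; apply: (idealN (entry_ideal i hk1)); exact: hv. Qed.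

Lemma Tnull_sum n (F : 'I_n -> 'cV[R]_d) :
  (forall t, Tnull (F t)) -> Tnull (\sum_t F t).
Proof.
by move=> hF i; rewrite summxE; apply: (ideal_sum (entry_ideal i hk1)) => t; apply: hF.
Qed.

Lemma Tnull_zeroA (Z : 'M[R]_d) (t : 'cV[R]_d) : zeroA I Z -> Tnull (Z *m t).
Proof.
move=> hZ i; rewrite mxE; apply: (ideal_sum (entry_ideal i hk1)) => m.
apply: (idealMr (entry_ideal i hk1)).
by apply: (dsys_le (l := d.+1)) (hZ i m) => //; apply: row_bounds.
Qed.

Lemma Tnull_mul_high (p : 'M[R]_d) (w : 'cV[R]_d) : inA I p ->
  (forall m : 'I_d, (m < k)%N -> w m ord0 = 0) -> Tnull (p *m w).
Proof.
move=> hp hw i; rewrite mxE; apply: (ideal_sum (entry_ideal i hk1)) => m.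
case: (ltnP m k) => hm; first by rewrite hw // mulr0; exact: ideal0 (entry_ideal i hk1).
apply: (idealMr (entry_ideal i hk1)).
apply: (dsys_le (l := m.+1)) (hp i m); first exact: row_bounds.
  by have := ltn_ord m; lia.
by lia.
Qed.

Lemma inJ_Tnull (X : 'M[R]_d) (t : 'cV[R]_d) : inJ I k X -> Tnull (X *m t).
Proof.
case=> _ [n [a [b [hab hZ]]]].
rewrite -(subrK (\sum_(s < n) a s *m fA R d k *m b s) X) mulmxDl.
apply: TnullD; first exact: Tnull_zeroA.
rewrite mulmx_suml; apply: Tnull_sum => s; rewrite -!mulmxA.
by apply: Tnull_mul_high (hab s).1 _ => m; apply: fA_mul_low.
Qed.

Let kk_lt : (k.-1 < d)%N. Proof. lia. Qed.
Let kk : 'I_d := Ordinal kk_lt.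

Definition ek : 'cV[R]_d := \col_m (m == kk)%:R.

Lemma succ_eq_k (j : 'I_d) : (j.+1 == k)%N = (j == kk).
Proof. by rewrite -(inj_eq val_inj) /=; apply/eqP/eqP; lia. Qed.

Lemma mulmx_ek m (X : 'M[R]_(m, d)) i : (X *m ek) i ord0 = X i kk.
Proof.
rewrite (mulmx_supp kk) => [|l /negbTE]; last by rewrite mxE => ->.
by rewrite mxE eqxx mulr1.
Qed.

Lemma eA_ek : eA R d k *m ek = ek.
Proof. by apply/colP => i; rewrite mulmx_ek !mxE succ_eq_k andbb. Qed.

Lemma trmx_ek_ek : ek^T *m ek = 1%:M.
Proof. by apply/matrixP => i j; rewrite !ord1 mulmx_ek !mxE eqxx. Qed.

(* For [k = d] there is no column k+1, but then f_d = 0 and I_{i,k+1} is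
   I_{i,d+1}, so c e_k is already zero in A. *)
Lemma Tnull_inJ (c : 'M[R]_d) :
  inA I c -> Tnull (c *m eA R d k *m ek) -> inJ I k (c *m eA R d k).
Proof.
move=> hc hX; have col_k (i : 'I_d) : I i.+1 k.+1 (c i kk).
  by have := hX i; rewrite mulmx_ek mulmx_eA succ_eq_k eqxx.
split; first exact: inA_mul_eA.
case: (ltnP k d) => hkd; last first.
  exists 0%N, (fun _ => 0), (fun _ => 0); split; first by split; apply: inA0.
  rewrite big_ord0 subr0 => i j; rewrite mulmx_eA succ_eq_k.
  case: eqP => [->|_]; first by have := col_k i; have -> : k.+1 = d.+1 by lia.
  by apply: ideal0 (entry_ideal _ _); lia.
pose k1 : 'I_d := Ordinal hkd.
pose a : 'M[R]_d := \matrix_(i, j) (if j == k1 then c i kk else 0).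
pose b : 'M[R]_d := \matrix_(i, j) ((i == k1) && (j == kk))%:R.
have ab_eq : a *m fA R d k *m b = c *m eA R d k.
  apply/matrixP => i j; rewrite mulmx_eA succ_eq_k.
  rewrite (mulmx_supp k1) => [|l /negbTE hl]; last by rewrite mxE hl.
  rewrite (mulmx_supp k1) => [|l /negbTE hl]; last by rewrite mxE hl.
  rewrite !mxE !eqxx ltnSn mulr1 /=.
  by case: eqP => [->|_]; rewrite ?mulr1 ?mulr0.
exists 1%N, (fun _ => a), (fun _ => b); split; last first.
  by rewrite big_ord1 ab_eq subrr; apply: zeroA0.
move=> _; split=> i j; rewrite mxE.
  by case: eqP => [->|_]; [apply: col_k | apply: entry0].
case: (i =P k1) => [->|_] /=; last by rewrite mulr0n; exact: entry0 i j.
case: (j =P kk) => [->|_] /=; last by rewrite mulr0n; exact: entry0 k1 j.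
by rewrite mulr1n; apply: dsys_full => /=; lia.
Qed.

Lemma Delta_Z_Tnull (c : 'M[R]_d) : inA I c ->
  Delta_Z I k (c *m eA R d k) <-> Tnull (c *m eA R d k *m ek).
Proof. by move=> hc; split; [apply: inJ_Tnull | apply: Tnull_inJ]. Qed.

Lemma Delta_S_JT (v : 'M[R]_d) : Delta_S I k v -> JT_S I k.-1 (d.+1 - k) (v *m ek).
Proof.
case=> a ha ->; exists 1%N, (fun _ => a *m eA R d k), (fun _ => ek).
split; last by apply/T_ZE; rewrite big_ord1 subrr; apply: Tnull0.
move=> _; split; first exact: inA_mul_eA.
exists 1%N, (fun _ => a), (fun _ => eA R d k); split; first by split; last apply: inA_eA.
by rewrite big_ord1 -mulmxA fA_pred_mul_eA ?subrr; [apply: zeroA0 | lia].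
Qed.

Definition in_image (w : 'cV[R]_d) := exists2 v, Delta_S I k v & Tnull (v *m ek - w).

Lemma Tnull_in_image (z : 'cV[R]_d) : Tnull z -> in_image z.
Proof.
move=> hz; exists 0; first by exists 0; [apply: inA0 | rewrite mul0mx].
by rewrite mul0mx sub0r; apply: TnullN.
Qed.

Lemma in_imageD (w1 w2 : 'cV[R]_d) : in_image w1 -> in_image w2 -> in_image (w1 + w2).
Proof.
case=> _ [a1 ha1 ->] h1 [_ [a2 ha2 ->] h2].
exists (a1 *m eA R d k + a2 *m eA R d k).
  by exists (a1 + a2); [apply: inAD | rewrite mulmxDl].
by rewrite mulmxDl opprD addrACA; apply: TnullD.
Qed.

Lemma in_image_sum n (F : 'I_n -> 'cV[R]_d) :
  (forall t, in_image (F t)) -> in_image (\sum_t F t).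
Proof.
move=> hF; apply: (big_ind in_image) => //; last exact: in_imageD.
by apply: Tnull_in_image; apply: Tnull0.
Qed.

Lemma eA_mul_off (y : 'cV[R]_d) (l : 'I_d) : l != kk -> (eA R d k *m y) l ord0 = 0.
Proof.
move=> /negbTE hl; rewrite mxE big1 // => m _.
by rewrite mxE succ_eq_k hl andbF mul0r.
Qed.

(* The e_k part of p f_{k-1} y comes from (p e_k y ek^T) e_k. *)
Lemma in_image_fA_pred (p : 'M[R]_d) (y : 'cV[R]_d) :
  inA I p -> in_image (p *m fA R d k.-1 *m y).
Proof.
move=> hp; rewrite fA_predE; last by lia.
rewrite mulmxDr mulmxDl; apply: in_imageD; last first.
  apply: Tnull_in_image; rewrite -mulmxA.
  by apply: Tnull_mul_high => // m; apply: fA_mul_low.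
pose a := p *m eA R d k *m y *m ek^T.
exists (a *m eA R d k); last first.
  by rewrite -mulmxA eA_ek /a -mulmxA trmx_ek_ek mulmx1 subrr; apply: Tnull0.
exists a => // i j; rewrite /a (mulmx_supp ord0) => [|l]; last by rewrite ord1 eqxx.
have -> : ek^T ord0 j = (j == kk)%:R by rewrite !mxE.
case: (j =P kk) => [->|_]; last by rewrite mulr0; exact: entry0.
rewrite mulr1 -mulmxA (mulmx_supp kk) => [|l]; last exact: eA_mul_off.
apply: (idealMr (entry_ideal i (row_bounds kk))); exact: hp.
Qed.

Lemma JT_in_image (w : 'cV[R]_d) : JT_S I k.-1 (d.+1 - k) w -> in_image w.
Proof.
case=> n [a [t [ha /T_ZE hz]]].
rewrite -(subrK (\sum_(s < n) a s *m t s) w); apply: in_imageD.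
  exact: Tnull_in_image.
apply: in_image_sum => s; case: (ha s) => _ [m [p [q [hpq hZ]]]].
rewrite -(subrK (\sum_(r < m) p r *m fA R d k.-1 *m q r) (a s)) mulmxDl.
apply: in_imageD; first exact/Tnull_in_image/Tnull_zeroA.
rewrite mulmx_suml; apply: in_image_sum => r; rewrite -mulmxA.
exact: in_image_fA_pred (hpq r).1.
Qed.

Lemma Delta_iso_JT_col : Delta_iso_JT d I k.
Proof.
exists (fun X => X *m ek); split.
- exact: Delta_S_JT.
- move=> _ _ [a ha ->] [b hb ->]; rewrite -!mulmxBl T_ZE.
  exact: Delta_Z_Tnull (inAB ha hb).
- by move=> v w _ _; rewrite mulmxDl subrr T_ZE; apply: Tnull0.
- by move=> x v _ _; rewrite mulmxA subrr T_ZE; apply: Tnull0.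
- by move=> w /JT_in_image [v hv hT]; exists v => //; apply/T_ZE.
Qed.

End FixedK.

End DSystemAlgebra.

Theorem lemma4p5 (R : pzRingType) (d : nat) (I : nat -> nat -> R -> Prop)
  (HI : d_system d I) (k : nat) (hk : (1 <= k <= d)%N) :
  Delta_iso_JT d I k.
Proof. exact: Delta_iso_JT_col. Qed.
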